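(* For $n\ge 3$ and every $i\in\{1,\dots,n\}$, $P_n(x_1,\dots,x_{i-1},1,x_{i+1},\dots,x_n)=C_{n-1}(x_1,\dots,x_{i-1},x_{i+1},\dots,x_n)=P_{n-1}(x_1,\dots,x_{i-1},x_{i+1},\dots,x_n)^2$.
   Context: Let $x_1,\dots,x_n$ be algebraically independent indeterminates over $\mathbb{Q}$; in an algebraic closure fix $y_j$ with $y_j^2=1-x_j^2$. For indices $i_1<\dots<i_m$, $\mathrm{EC}_m(x_{i_1},\dots,x_{i_m})=\sum_{S\subseteq\{i_1,\dots,i_m\},\ |S|\text{ even}}(-1)^{|S|/2}\prod_{j\in S}y_j\prod_{j\notin S}x_j$. For $k\ge 1$, $C_k(x_1,\dots,x_k)=\prod_{\sigma\in G_k}(\sigma(\mathrm{EC}_k(x_1,\dots,x_k))-1)$, where $G_k$ is the Galois group of $\mathbb{Q}(x_1,\dots,x_k,\ y_iy_j:1\le i<j\le k)$ over $\mathbb{Q}(x_1,\dots,x_k)$. $P_1=x_1-1$ and for $k\ge 2$, $P_k(x_1,\dots,x_k)=\prod_{\sigma\in G_{k-1}}(x_k-\sigma(\mathrm{EC}_{k-1}(x_1,\dots,x_{k-1})))$; these are polynomials with rational coefficients, and by the same formulas they are evaluated at any list of variables (renaming $x_j,y_j$ accordingly). *)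

(* Variables x_1..x_n are 0-indexed as x 0 .. x (n-1),
   points are functions nat -> algC (only the first k values matter). *)
From HB Require Import structures.
From mathcomp Require Import all_boot all_order all_algebra all_field.
Set Implicit Arguments. Unset Strict Implicit. Unset Printing Implicit Defensive.
Import Order.TTheory GRing.Theory Num.Theory.
Local Open Scope ring_scope.

(* EC_m(x_0,...,x_{m-1}) evaluated at a point (x,y) with y_j^2 = 1 - x_j^2. *)
Definition EC (m : nat) (x y : nat -> algC) : algC :=
  \sum_(T : {set 'I_m} | ~~ odd #|T|)
     (-1) ^+ (#|T| %/ 2) * (\prod_(j in T) y j) * \prod_(j in ~: T) x j.

(* The Galois group G_m acts by y_j |-> -y_j for j in a set S, with S and its
   complement giving the same automorphism.  [flip S y] applies the sign change. *)
Definition flip (m : nat) (S : {set 'I_m}) (y : nat -> algC) : nat -> algC :=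
  fun j => if j \in [seq val i | i in S] then - y j else y j.

(* Representatives of G_m: sign-change sets not containing index 0
   (for m = 0 only the empty set, i.e. the trivial group). *)
Definition Grep (m : nat) (S : {set 'I_m}) : bool := [forall j in S, val j != 0%N].

Definition C (k : nat) (x y : nat -> algC) : algC :=
  \prod_(S : {set 'I_k} | Grep S) (EC k x (flip S y) - 1).

(* P_k evaluated at (x,y); x k.-1 is the last variable x_k. *)
Definition P (k : nat) (x y : nat -> algC) : algC :=
  if k is 1 then x 0%N - 1 else
  \prod_(S : {set 'I_k.-1} | Grep S) (x k.-1 - EC k.-1 x (flip S y)).

Definition set_at (i : nat) (v : algC) (x : nat -> algC) : nat -> algC :=
  fun j => if j == i then v else x j.

Definition del (i : nat) (x : nat -> algC) : nat -> algC :=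
  fun j => if (j < i)%N then x j else x j.+1.

From HB Require Import structures.
From mathcomp Require Import all_boot all_order all_algebra all_field.
From mathcomp Require Import ring.
From Stdlib Require Import FunctionalExtensionality.
Import Order.TTheory GRing.Theory Num.Theory.
Local Open Scope ring_scope.

(* Write z_j = x_j + i y_j.  Since y_j^2 = 1 - x_j^2 we have z_j^-1 = x_j - i y_j,
   so EC_m = (Z + Z^-1)/2 with Z = z_1 ... z_m: EC_m is the cosine of the sum of
   the angles, and G_m changes the signs of some y_j (a set of signs and its
   complement giving the same automorphism).  Pairing the elements of G_k that
   differ only in the last sign, (cos(A+B) - 1)(cos(A-B) - 1) = (cos A - cos B)^2
   gives C_k = P_k^2.  Setting x_i = 1, y_i = 0 makes z_i = 1: EC_(n-1) forgets
   the i-th variable and the sign at i no longer matters, so the factors of P_n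
   come in equal pairs and P_n = P_(n-1)^2.  For i = n, P_n is the product of the
   1 - EC_(n-1), which is C_(n-1) because |G_(n-1)| is even. *)

Set Implicit Arguments.
Unset Strict Implicit.
Unset Printing Implicit Defensive.

Lemma cos_add_sub_identity (F : numFieldType) (u v : F) : u != 0 -> v != 0 ->
  ((u * v + (u * v)^-1) / 2 - 1) * ((u / v + (u / v)^-1) / 2 - 1) =
  ((v + v^-1) / 2 - (u + u^-1) / 2) ^+ 2.
Proof. by move=> u0 v0; field; rewrite u0 v0. Qed.

Definition unit_circle (x y : nat -> algC) := forall j, y j ^+ 2 = 1 - x j ^+ 2.

Definition cis_prod (m : nat) (x y : nat -> algC) : algC :=
  \prod_(j < m) (x j + 'i * y j).

Lemma cis_prod_recr m x y : cis_prod m.+1 x y = cis_prod m x y * (x m + 'i * y m).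
Proof. exact: big_ord_recr. Qed.

Lemma eq_cis_prod m x y y' : (forall j, (j < m)%N -> y j = y' j) ->
  cis_prod m x y = cis_prod m x y'.
Proof. by move=> eqy; apply: eq_bigr => j _; rewrite eqy. Qed.

Lemma cis_prod_expand m x y : cis_prod m x y =
  \sum_(T : {set 'I_m}) 'i ^+ #|T| * (\prod_(j in T) y j) * \prod_(j in ~: T) x j.
Proof.
rewrite /cis_prod (eq_bigr (fun j : 'I_m => 'i * y j + x j)); last first.
  by move=> j _; rewrite addrC.
rewrite bigA_distr; apply: eq_bigr => T _.
rewrite (bigID (mem T)) /=; congr (_ * _).
  by rewrite -prodrMl; apply: eq_bigr => j ->.
by apply: eq_big => [j | j /negbTE ->]; rewrite ?in_setC.
Qed.

Lemma EC_cis_prod_opp m x y : EC m x y = (cis_prod m x y + cis_prod m x (\- y)) / 2.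
Proof.
rewrite !cis_prod_expand -big_split /= /EC.
have prodN (T : {set 'I_m}) : \prod_(j in T) (\- y) j = (-1) ^+ #|T| * \prod_(j in T) y j.
  exact: prodrN.
rewrite [X in _ = X / 2](bigID (fun T : {set 'I_m} => odd #|T|)) /=.
rewrite [X in _ = (X + _) / 2]big1 ?add0r => [|T oddT]; last first.
  by rewrite prodN -signr_odd oddT mulN1r mulrN mulNr addrN.
rewrite mulr_suml; apply: eq_bigr => T evenT.
rewrite prodN -[(-1) ^+ #|T|]signr_odd (negbTE evenT) expr0 mul1r.
have -> : 'i ^+ #|T| = (-1) ^+ (#|T| %/ 2) :> algC.
  by rewrite -{1}(@divnK 2 #|T|) ?dvdn2 // mulnC exprM sqrCi.
by field.
Qed.

Lemma neq0_mul_eq1 (R : nzRingType) (u v : R) : u * v = 1 -> u != 0.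
Proof. by apply: contra_eqN => /eqP->; rewrite mul0r eq_sym oner_neq0. Qed.

Lemma cis_mul_conj (a b : algC) : b ^+ 2 = 1 - a ^+ 2 ->
  (a + 'i * b) * (a + 'i * - b) = 1.
Proof.
move=> hb; transitivity (a ^+ 2 - 'i ^+ 2 * b ^+ 2); first by ring.
by rewrite sqrCi hb; ring.
Qed.

Lemma cis_re (a b : algC) : b ^+ 2 = 1 - a ^+ 2 ->
  a = ((a + 'i * b) + (a + 'i * b)^-1) / 2.
Proof. by move/cis_mul_conj/mulr1_eq->; field. Qed.

Section UnitCircle.
Variables (x y : nat -> algC).
Hypothesis xy : unit_circle x y.

Lemma cis_prod_mul_opp m : cis_prod m x y * cis_prod m x (\- y) = 1.
Proof. by rewrite -big_split; apply: big1 => j _; exact: cis_mul_conj. Qed.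

Lemma cis_prod_neq0 m : cis_prod m x y != 0.
Proof. exact: neq0_mul_eq1 (cis_prod_mul_opp m). Qed.

Lemma EC_cis_prod m : EC m x y = (cis_prod m x y + (cis_prod m x y)^-1) / 2.
Proof. by rewrite EC_cis_prod_opp (mulr1_eq (cis_prod_mul_opp m)). Qed.

End UnitCircle.

Lemma flip_val m (S : {set 'I_m}) y j (jm : (j < m)%N) :
  flip S y j = if Ordinal jm \in S then - y j else y j.
Proof.
rewrite /flip; congr (if _ then _ else _).
apply/mapP/idP => [[k kS jk] | jS]; last by exists (Ordinal jm); rewrite ?mem_enum.
by rewrite mem_enum in kS; rewrite (_ : Ordinal jm = k) //; apply: val_inj.
Qed.

Lemma flip_out m (S : {set 'I_m}) y j : (m <= j)%N -> flip S y j = y j.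
Proof.
move=> mj; rewrite /flip; case: mapP => // -[k _ jk].
by move: (ltn_ord k); rewrite -jk ltnNge mj.
Qed.

Lemma unit_circle_flip m (S : {set 'I_m}) x y :
  unit_circle x y -> unit_circle x (flip S y).
Proof. by move=> xy j; rewrite /flip; case: ifP; rewrite ?sqrrN. Qed.

Lemma eq_EC m x x' y y' : (forall j, (j < m)%N -> x j = x' j) ->
  (forall j, (j < m)%N -> y j = y' j) -> EC m x y = EC m x' y'.
Proof.
move=> eqx eqy; apply: eq_bigr => T _.
by congr (_ * _ * _); apply: eq_bigr => j _; rewrite ?eqx ?eqy.
Qed.

Lemma EC_setC m x (S : {set 'I_m}) y : EC m x (flip (~: S) y) = EC m x (flip S y).
Proof.
rewrite !EC_cis_prod_opp addrC; congr ((_ + _) / 2); apply: eq_cis_prod => j jm /=;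
  by rewrite !(flip_val _ _ jm) in_setC; case: (_ \in S); rewrite ?opprK.
Qed.

Lemma del_bump i (f : nat -> algC) j : del i f j = f (bump i j).
Proof. by rewrite /del /bump; case: ltnP => _; rewrite ?add0n ?add1n. Qed.

Lemma del_set_at i v f : del i (set_at i v f) = del i f.
Proof.
apply: functional_extensionality => j.
by rewrite !del_bump /set_at eq_sym (negbTE (neq_bump _ _)).
Qed.

Lemma cis_prod_del m i x y : (i < m.+1)%N -> x i = 1 -> y i = 0 ->
  cis_prod m.+1 x y = cis_prod m (del i x) (del i y).
Proof.
move=> im xi yi; rewrite /cis_prod (bigD1_ord (Ordinal im)) //= xi yi mulr0 addr0 mul1r.
by apply: eq_bigr => j _; rewrite !del_bump.
Qed.

Lemma EC_del m i x y : (i < m.+1)%N -> x i = 1 -> y i = 0 ->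
  EC m.+1 x y = EC m (del i x) (del i y).
Proof.
move=> im xi yi; rewrite !EC_cis_prod_opp !(cis_prod_del im xi) //=; last by rewrite yi oppr0.
by congr ((_ + _) / 2); apply: eq_cis_prod => j _; rewrite /= !del_bump.
Qed.

Section LiftSets.
Variables (m : nat) (i0 : 'I_m.+1).

Definition unlift_set (T : {set 'I_m.+1}) : {set 'I_m} := [set j | lift i0 j \in T].

Lemma notin_lift_imset (S : {set 'I_m}) : i0 \notin lift i0 @: S.
Proof. by apply/imsetP => -[j _ /eqP]; apply/negP; exact: neq_lift. Qed.

Lemma unlift_setK (S : {set 'I_m}) : unlift_set (lift i0 @: S) = S.
Proof. by apply/setP => j; rewrite inE mem_imset //; exact: lift_inj. Qed.

Lemma unlift_setU1K (S : {set 'I_m}) : unlift_set (i0 |: lift i0 @: S) = S.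
Proof.
apply/setP => j; rewrite inE in_setU1 mem_imset; last exact: lift_inj.
by rewrite eq_sym (negbTE (neq_lift _ _)).
Qed.

Lemma unlift_setKV (T : {set 'I_m.+1}) : i0 \notin T -> lift i0 @: unlift_set T = T.
Proof.
move=> i0T; apply/setP => k; case: (unliftP i0 k) => [j ->|->].
  by rewrite mem_imset ?inE //; exact: lift_inj.
by rewrite (negbTE i0T) (negbTE (notin_lift_imset _)).
Qed.

Lemma unlift_setU1KV (T : {set 'I_m.+1}) : i0 \in T -> i0 |: lift i0 @: unlift_set T = T.
Proof.
move=> i0T; apply/setP => k; rewrite in_setU1; case: (unliftP i0 k) => [j ->|->].
  by rewrite eq_sym (negbTE (neq_lift _ _)) mem_imset ?inE //; exact: lift_inj.
by rewrite eqxx i0T.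
Qed.

Lemma flip_del (T : {set 'I_m.+1}) y : del i0 (flip T y) = flip (unlift_set T) (del i0 y).
Proof.
apply: functional_extensionality => j; rewrite !del_bump.
case: (ltnP j m) => [jm | mj].
  have bjm : (bump i0 j < m.+1)%N := ltn_ord (lift i0 (Ordinal jm)).
  rewrite (flip_val _ _ jm) (flip_val _ _ bjm) del_bump inE.
  by rewrite (_ : Ordinal bjm = lift i0 (Ordinal jm)) //; apply: val_inj.
have i0m : (i0 <= m)%N by rewrite -ltnS.
by rewrite !flip_out ?del_bump // /bump (leq_trans i0m mj) add1n ltnS.
Qed.

Lemma flip_unlift_set (T : {set 'I_m.+1}) y j : (j < i0)%N ->
  flip T y j = flip (unlift_set T) y j.
Proof.
move=> ji; move: (congr1 (fun f => f j) (flip_del T y)).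
by rewrite /= {1}/del ji => ->; rewrite /flip /del ji.
Qed.

Variable R : comPzSemiRingType.
Variables (P : pred {set 'I_m.+1}) (F : {set 'I_m.+1} -> R).

Lemma big_set_notin :
  \prod_(T | P T && (i0 \notin T)) F T =
  \prod_(S : {set 'I_m} | P (lift i0 @: S)) F (lift i0 @: S).
Proof.
rewrite (reindex_onto (fun S : {set 'I_m} => lift i0 @: S) unlift_set) => [|T /andP[_]].
  by apply: eq_bigl => S; rewrite notin_lift_imset unlift_setK eqxx !andbT.
exact: unlift_setKV.
Qed.

Lemma big_set_in : \prod_(T | P T && (i0 \in T)) F T =
  \prod_(S : {set 'I_m} | P (i0 |: lift i0 @: S)) F (i0 |: lift i0 @: S).
Proof.
rewrite (reindex_onto (fun S : {set 'I_m} => i0 |: lift i0 @: S) unlift_set) => [|T /andP[_]].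
  by apply: eq_bigl => S; rewrite setU11 unlift_setU1K eqxx !andbT.
exact: unlift_setU1KV.
Qed.

End LiftSets.

Lemma Grep0 m (T : {set 'I_m.+1}) : Grep T = (ord0 \notin T).
Proof.
apply/forall_inP/idP => [G0 | T0 j jT]; first by apply/negP => /G0.
by apply: contraNneq T0 => j0; rewrite (_ : ord0 = j) //; apply: val_inj.
Qed.

Lemma Grep_setU1 m (i0 : 'I_m) (A : {set 'I_m}) :
  Grep (i0 |: A) = (val i0 != 0%N) && Grep A.
Proof.
apply/forall_inP/andP => [G | [i0n0 /forall_inP G] j].
  by split; [apply: G; exact: setU11 | apply/forall_inP => j jA; apply: G; rewrite setU1r].
by rewrite in_setU1 => /predU1P[-> // | /G].
Qed.

Lemma Grep_lift m (i0 : 'I_m.+1) (S : {set 'I_m}) : val i0 != 0%N ->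
  Grep (lift i0 @: S) = Grep S.
Proof.
move=> i0n0; apply/forall_inP/forall_inP => G j.
  move=> jS; apply: contraNneq (G _ (imset_f (lift i0) jS)) => j0.
  by rewrite /= /bump j0 addn0 leqn0 (negbTE i0n0).
case/imsetP => k kS ->; have := G _ kS; rewrite /= /bump.
by case: (val k) => // k'; rewrite addnS.
Qed.

Section ProdGrep.
Variable R : comPzSemiRingType.

Lemma big_Grep_split m (i0 : 'I_m.+1) (F : {set 'I_m.+1} -> R) : val i0 != 0%N ->
  \prod_(T | Grep T) F T =
  \prod_(S : {set 'I_m} | Grep S) (F (lift i0 @: S) * F (i0 |: lift i0 @: S)).
Proof.
move=> i0n0; rewrite big_split /= (bigID (fun T : {set 'I_m.+1} => i0 \in T)) mulrC /=.
rewrite big_set_notin big_set_in.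
by congr (_ * _); apply: eq_bigl => S; rewrite ?Grep_setU1 Grep_lift ?i0n0.
Qed.

Lemma big_Grep_lift0 m (F : {set 'I_m.+1} -> R) :
  \prod_(T | Grep T) F T = \prod_(S : {set 'I_m}) F (lift ord0 @: S).
Proof.
transitivity (\prod_(T : {set 'I_m.+1} | predT T && (ord0 \notin T)) F T).
  by apply: eq_bigl => T; rewrite Grep0.
exact: big_set_notin.
Qed.

Lemma prod_setC_sqr m (F : {set 'I_m.+1} -> R) : (forall S, F (~: S) = F S) ->
  \prod_(S : {set 'I_m.+1}) F S = (\prod_(S | Grep S) F S) ^+ 2.
Proof.
move=> FC; rewrite (bigID (fun S : {set 'I_m.+1} => ord0 \in S)) /= expr2 mulrC.
congr (_ * _).
  by apply: eq_bigl => S; rewrite Grep0.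
rewrite (reindex_inj (@setC_inj _)) /=; apply: eq_big => S; first by rewrite Grep0 in_setC.
by rewrite FC.
Qed.

(* The complement hypothesis serves i0 = 0, a sign that G_k never changes. *)
Lemma prod_Grep_unlift m (i0 : 'I_m.+2) (F : {set 'I_m.+1} -> R) (G : {set 'I_m.+2} -> R) :
  (forall T, G T = F (unlift_set i0 T)) -> (forall S, F (~: S) = F S) ->
  \prod_(T | Grep T) G T = (\prod_(S | Grep S) F S) ^+ 2.
Proof.
move=> GF FC; have [i00 | i0n0] := eqVneq (val i0) 0%N.
  have i0E : i0 = ord0 by apply: val_inj.
  by rewrite big_Grep_lift0 -prod_setC_sqr //; apply: eq_bigr => S _; rewrite GF i0E unlift_setK.
rewrite (big_Grep_split _ i0n0) -prodrXl; apply: eq_bigr => S _.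
by rewrite !GF unlift_setK unlift_setU1K expr2.
Qed.

End ProdGrep.

Lemma prod_Grep_opp (R : comPzRingType) m (F : {set 'I_m.+2} -> R) :
  \prod_(T | Grep T) - F T = \prod_(T | Grep T) F T.
Proof.
rewrite [LHS](@big_Grep_split _ _ ord_max) // [RHS](@big_Grep_split _ _ ord_max) //.
by apply: eq_bigr => S _; rewrite mulrNN.
Qed.

Lemma C_sqr_P m x y : unit_circle x y -> C m.+2 x y = P m.+2 x y ^+ 2.
Proof.
move=> xy; rewrite /C /P /= (@big_Grep_split _ _ ord_max) // -prodrXl.
apply: eq_bigr => S _.
set T1 := lift ord_max @: S; set T2 := ord_max |: T1.
set W := cis_prod m.+1 x (flip S y); set z := x m.+1 + 'i * y m.+1.
have xy1 := xy m.+1.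
have last_val (T : {set 'I_m.+2}) : flip T y m.+1 = if ord_max \in T then - y m.+1 else y m.+1.
  by rewrite (flip_val _ _ (ltnSn m.+1)); congr (if _ \in _ then _ else _); apply: val_inj.
have head_val (T : {set 'I_m.+2}) : unlift_set ord_max T = S -> cis_prod m.+1 x (flip T y) = W.
  by move=> TS; apply: eq_cis_prod => j jm; rewrite (@flip_unlift_set _ ord_max) ?TS.
have Z1 : cis_prod m.+2 x (flip T1 y) = W * z.
  by rewrite cis_prod_recr head_val ?unlift_setK // last_val (negbTE (notin_lift_imset _ _)).
have Z2 : cis_prod m.+2 x (flip T2 y) = W * z^-1.
  rewrite cis_prod_recr head_val ?unlift_setU1K // last_val setU11.
  by rewrite (mulr1_eq (cis_mul_conj xy1)).
rewrite !EC_cis_prod ?Z1 ?Z2; try exact: unit_circle_flip.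
rewrite [x m.+1](cis_re xy1) -/z cos_add_sub_identity //.
  exact: (cis_prod_neq0 (unit_circle_flip S xy)).
exact: (neq0_mul_eq1 (cis_mul_conj xy1)).
Qed.

Lemma EC_set_at m (i0 : 'I_m.+1) x y (T : {set 'I_m.+1}) :
  EC m.+1 (set_at i0 1 x) (flip T (set_at i0 0 y)) =
  EC m (del i0 x) (flip (unlift_set i0 T) (del i0 y)).
Proof.
rewrite (EC_del (ltn_ord i0)) ?flip_del ?del_set_at //; first by rewrite /set_at eqxx.
by rewrite /flip /set_at eqxx; case: ifP; rewrite ?oppr0.
Qed.

Theorem mainTheorem5 (n i : nat) (x y : nat -> algC) :
  (3 <= n)%N -> (i < n)%N ->
  (forall j : nat, y j ^+ 2 = 1 - x j ^+ 2) ->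
  P n (set_at i 1 x) (set_at i 0 y) = C n.-1 (del i x) (del i y) /\
  C n.-1 (del i x) (del i y) = P n.-1 (del i x) (del i y) ^+ 2.
Proof.
case: n => [|[|[|m]]] //= _ ltim xy.
have xy_del : unit_circle (del i x) (del i y) by move=> j; rewrite !del_bump.
split; last exact: C_sqr_P.
case: (ltnP i m.+2) => [im | mi].
  rewrite C_sqr_P // /P /= /set_at (gtn_eqF im) /del ltnNge -ltnS im /=.
  apply: (@prod_Grep_unlift _ _ (Ordinal im)) => [T | S]; last by rewrite EC_setC.
  by congr (_ - _); exact: (@EC_set_at _ (Ordinal im)).
have {mi ltim} -> : i = m.+2 by apply/eqP; rewrite eqn_leq mi -ltnS ltim.
rewrite /P /C /= -prod_Grep_opp; apply: eq_bigr => T _.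
rewrite opprB /set_at eqxx; congr (_ - _); apply: eq_EC => j jm.
  by rewrite /del jm (ltn_eqF jm).
by rewrite /flip /del jm (ltn_eqF jm).
Qed.
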